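(* Let $K$ be a field of characteristic $\neq 2$, $n\ge1$, and let $\mathcal C$ be an EACP over $K$ with natural basis $\{h_1,\dots,h_n,r\}$ and structural constants $a_{ij},b_i$, and suppose $\det(a_{ij})_{i,j=1}^n\neq0$. For $a\in\mathcal C$ let $L_a:\mathcal C\to\mathcal C$, $L_a(x)=ax$, and write $L_i=L_{h_i}$. Then the set of all left multiplication operators $\{L_a: a\in\mathcal C\}$ equals the linear span of $\{L_1,\dots,L_n,L_r\}$, the map $a\mapsto L_a$ is injective, and this span has the same dimension $n+1$ as $\mathcal C$ (so $\{L_1,\dots,L_n,L_r\}$ is a basis of it).
   Context: An EACP over a field $K$ (characteristic $\neq 2$) is a $K$-algebra $\mathcal C$ with a basis $\{h_1,\dots,h_n,r\}$ (called a natural basis) whose multiplication is determined by bilinearity from $$h_ir=rh_i=\tfrac12\Big(\sum_{j=1}^n a_{ij}h_j+b_ir\Big),\qquad h_ih_j=0\ (i,j=1,\dots,n),\qquad rr=0,$$ for some constants $a_{ij},b_i\in K$. *)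

From HB Require Import structures.
From mathcomp Require Import all_boot all_order all_algebra.
Set Implicit Arguments. Unset Strict Implicit. Unset Printing Implicit Defensive.
Import Order.TTheory GRing.Theory Num.Theory.
Local Open Scope ring_scope.

(* Concrete model of an EACP: C = K^(n+1), with coordinates indexed by
   'I_(n + 1); the natural basis is h_i = eacp_e (lshift 1 i) (i : 'I_n)
   and r = eacp_e (rshift n ord0). *)

Definition eacp_e (K : fieldType) (n : nat) (k : 'I_(n + 1)) : 'rV[K]_(n + 1) :=
  delta_mx 0 k.

Definition eacp_h (K : fieldType) (n : nat) (i : 'I_n) : 'rV[K]_(n + 1) :=
  eacp_e K (lshift 1 i).

Definition eacp_r (K : fieldType) (n : nat) : 'rV[K]_(n + 1) :=
  eacp_e K (rshift n (@ord0 0)).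

(* h_i r = r h_i = 1/2 (sum_j a_ij h_j + b_i r) *)
Definition eacp_hr (K : fieldType) (n : nat) (A : 'M[K]_n) (b : 'rV[K]_n)
    (i : 'I_n) : 'rV[K]_(n + 1) :=
  2^-1 *: (\sum_(j < n) A i j *: eacp_h K j + b 0 i *: eacp_r K n).

Definition eacp_basis_mul (K : fieldType) (n : nat) (A : 'M[K]_n) (b : 'rV[K]_n)
    (p q : 'I_(n + 1)) : 'rV[K]_(n + 1) :=
  match split p, split q with
  | inl i, inr _ => eacp_hr A b i
  | inr _, inl i => eacp_hr A b i
  | _, _ => 0
  end.

Definition eacp_mul (K : fieldType) (n : nat) (A : 'M[K]_n) (b : 'rV[K]_n)
    (x y : 'rV[K]_(n + 1)) : 'rV[K]_(n + 1) :=
  \sum_(p < n + 1) \sum_(q < n + 1) (x 0 p * y 0 q) *: eacp_basis_mul A b p q.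

(* matrix of the left multiplication operator L_a : x |-> a x
   (row-vector convention: x *m eacp_L A b a = a x) *)
Definition eacp_L (K : fieldType) (n : nat) (A : 'M[K]_n) (b : 'rV[K]_n)
    (a : 'rV[K]_(n + 1)) : 'M[K]_(n + 1) :=
  lin1_mx (eacp_mul A b a).

From HB Require Import structures.
From mathcomp Require Import all_boot all_order all_algebra.
Import Order.TTheory GRing.Theory Num.Theory.
Local Open Scope ring_scope.

(* The map a |-> L_a is linear, so everything reduces to its kernel being
   trivial.  If a x = 0 for all x, take x = r: the h-coordinates of a r are
   those of u A / 2, where u is the h-part of a, so u = 0 as A is invertible.
   Then a h_i = a_r (h_i r), whose h-part is a_r / 2 times the nonzero i-th
   row of A, forcing a_r = 0. *)

Lemma split_lshift (m n : nat) (i : 'I_m) : split (lshift n i) = inl i.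
Proof. exact: (unsplitK (inl _ i)). Qed.

Lemma split_rshift (m n : nat) (i : 'I_n) : split (rshift m i) = inr i.
Proof. exact: (unsplitK (inr _ i)). Qed.

Lemma row_unitmx_neq0 {K : fieldType} {n : nat} {M : 'M[K]_n} (i : 'I_n) :
  M \in unitmx -> row i M != 0.
Proof.
move=> Munit; apply/eqP => rowM0.
have /rowP/(_ i)/eqP : 'e_i = 0 :> 'rV[K]_n.
  by rewrite -(mulmxK Munit 'e_i) -rowE rowM0 mul0mx.
by rewrite !mxE !eqxx oner_eq0.
Qed.

Section EacpLeftMultiplication.

Variables (K : fieldType) (n : nat) (A : 'M[K]_n) (b : 'rV[K]_n).

Local Notation h := (eacp_h K).
Local Notation r := (eacp_r K n).
Local Notation mul := (eacp_mul A b).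
Local Notation L := (eacp_L A b).

Lemma row_mx_eacp_basis (c : 'rV[K]_n) (d : K) :
  row_mx c d%:M = \sum_(i < n) c 0 i *: h i + d *: r.
Proof.
rewrite {1}[row_mx _ _]row_sum_delta big_split_ord big_ord1 /=.
congr (_ + _); first by apply: eq_bigr => i _; rewrite row_mxEl.
by rewrite row_mxEr mxE.
Qed.

Lemma eacp_mul_linearl (y : 'rV[K]_(n + 1)) : linear (mul ^~ y).
Proof.
move=> k x z; rewrite /eacp_mul scaler_sumr -big_split; apply: eq_bigr => p _.
rewrite scaler_sumr -big_split; apply: eq_bigr => q _.
by rewrite !mxE mulrDl -mulrA scalerDl scalerA.
Qed.

Lemma eacp_L_is_linear : linear L.
Proof.
by move=> k x y; apply/matrixP => i j; rewrite !mxE eacp_mul_linearl !mxE.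
Qed.

HB.instance Definition _ :=
  GRing.isLinear.Build K 'rV[K]_(n + 1) 'M[K]_(n + 1) *:%R L eacp_L_is_linear.

Lemma row_eacp_L (a : 'rV[K]_(n + 1)) (k : 'I_(n + 1)) :
  row k (L a) = mul a (eacp_e K k).
Proof. by apply/rowP => j; rewrite !mxE. Qed.

Lemma eacp_mul_e (a : 'rV[K]_(n + 1)) (k : 'I_(n + 1)) :
  mul a (eacp_e K k) = \sum_p a 0 p *: eacp_basis_mul A b p k.
Proof.
apply: eq_bigr => p _; rewrite (bigD1 k) //= big1 => [|q /negbTE kq].
  by rewrite mxE !eqxx mulr1 addr0.
by rewrite mxE kq mulr0 scale0r.
Qed.

Lemma eacp_mul_r (a : 'rV[K]_(n + 1)) :
  mul a r = \sum_(i < n) a 0 (lshift 1 i) *: eacp_hr A b i.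
Proof.
rewrite eacp_mul_e big_split_ord big_ord1 /eacp_basis_mul /=.
rewrite split_rshift scaler0 addr0; apply: eq_bigr => i _.
by rewrite split_lshift.
Qed.

Lemma eacp_mul_h (a : 'rV[K]_(n + 1)) (i : 'I_n) :
  mul a (h i) = a 0 (rshift n ord0) *: eacp_hr A b i.
Proof.
rewrite eacp_mul_e big_split_ord big_ord1 /eacp_basis_mul /=.
rewrite split_lshift split_rshift big1 ?add0r // => j _.
by rewrite split_lshift scaler0.
Qed.

Lemma lsubmx_eacp_hr (i : 'I_n) : lsubmx (eacp_hr A b i) = 2^-1 *: row i A.
Proof.
rewrite /eacp_hr (eq_bigr (fun j => row i A 0 j *: h j)) => [|j _].
  by rewrite -row_mx_eacp_basis linearZ /= row_mxKl.
by rewrite mxE.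
Qed.

Lemma lsubmx_eacp_mul_r (a : 'rV[K]_(n + 1)) :
  lsubmx (mul a r) = 2^-1 *: (lsubmx a *m A).
Proof.
rewrite eacp_mul_r linear_sum mulmx_sum_row scaler_sumr.
apply: eq_bigr => i _.
by rewrite linearZ /= lsubmx_eacp_hr scalerA mulrC -scalerA mxE.
Qed.

Lemma eacp_L_eq0 (a : 'rV[K]_(n + 1)) :
  (2%:R : K) != 0 -> (0 < n)%N -> \det A != 0 -> L a = 0 -> a = 0.
Proof.
move=> two_neq0 n_gt0 detA_neq0 La0.
have half_neq0 : (2^-1 : K) != 0 by rewrite invr_eq0.
have Aunit : A \in unitmx by rewrite unitmxE unitfE.
have mul_a0 k : mul a (eacp_e K k) = 0 by rewrite -row_eacp_L La0 row0.
have u0 : lsubmx a = 0.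
  have := lsubmx_eacp_mul_r a; rewrite mul_a0 linear0 => /esym/eqP.
  rewrite scaler_eq0 (negbTE half_neq0) /= => /eqP uA0.
  by rewrite -(mulmxK Aunit (lsubmx a)) uA0 mul0mx.
pose i0 : 'I_n := Ordinal n_gt0.
have d0 : a 0 (rshift n ord0) = 0.
  have /eqP := congr1 lsubmx (mul_a0 (lshift 1 i0)).
  rewrite -/(h i0) eacp_mul_h linearZ /= lsubmx_eacp_hr linear0 scalerA.
  rewrite scaler_eq0 (negbTE (row_unitmx_neq0 i0 Aunit)) orbF.
  by rewrite mulf_eq0 (negbTE half_neq0) orbF => /eqP.
rewrite -[a]hsubmxK u0 [rsubmx a]mx11_scalar mxE d0.
by rewrite -scalemx1 scale0r row_mx0.
Qed.

Lemma eacp_L_row_mx (c : 'rV[K]_n) (d : K) :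
  L (row_mx c d%:M) = \sum_(i < n) c 0 i *: L (h i) + d *: L r.
Proof.
rewrite row_mx_eacp_basis linearD linear_sum linearZ.
by under eq_bigr do rewrite linearZ.
Qed.

End EacpLeftMultiplication.

Theorem mainTheorem10 (K : fieldType) (n : nat) (A : 'M[K]_n) (b : 'rV[K]_n) :
  (2%:R : K) != 0 -> (0 < n)%N -> \det A != 0 ->
  [/\ (* every L_a lies in span{L_1,...,L_n,L_r} *)
      (forall a : 'rV[K]_(n + 1), exists (c : 'rV[K]_n) (d : K),
          eacp_L A b a = \sum_(i < n) c 0 i *: eacp_L A b (eacp_h K i)
                         + d *: eacp_L A b (eacp_r K n)),
      (* every element of the span is some L_a *)
      (forall (c : 'rV[K]_n) (d : K), exists a : 'rV[K]_(n + 1),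
          \sum_(i < n) c 0 i *: eacp_L A b (eacp_h K i)
            + d *: eacp_L A b (eacp_r K n) = eacp_L A b a),
      (* a |-> L_a is injective *)
      injective (eacp_L A b) &
      (* L_1,...,L_n,L_r are linearly independent, so the span has dimension n+1 *)
      (forall (c : 'rV[K]_n) (d : K),
          \sum_(i < n) c 0 i *: eacp_L A b (eacp_h K i)
            + d *: eacp_L A b (eacp_r K n) = 0 -> c = 0 /\ d = 0)].
Proof.
move=> two_neq0 n_gt0 detA_neq0.
have ker0 := @eacp_L_eq0 K n A b _ two_neq0 n_gt0 detA_neq0.
split.
- move=> a; exists (lsubmx a), (rsubmx a 0 0).
  by rewrite -eacp_L_row_mx -mx11_scalar hsubmxK.
- by move=> c d; exists (row_mx c d%:M); rewrite eacp_L_row_mx.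
- move=> x y Lxy; apply/eqP; rewrite -subr_eq0; apply/eqP/ker0.
  by rewrite linearB /= Lxy subrr.
- move=> c d; rewrite -eacp_L_row_mx => /ker0.
  rewrite -row_mx0 => /eq_row_mx[-> /matrixP/(_ 0 0)].
  by rewrite !mxE.
Qed.
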